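(* Let $n,m$ be positive integers with $m+2\le n$, and let $\tilde{\mathcal I}$ be the family of non-empty independent sets $I$ of $P_n^m$ with $\min I\leq m+1$ and $\max I\geq n-m$. For every $I\in\tilde{\mathcal I}$, $\gamma_{gr}(P_n^m,I)=\max I-\min I+1-(|I|-1)m$. Moreover, for every non-empty independent set $I$ of $P_n^m$ there exists $I'\in\tilde{\mathcal I}$ such that $\gamma_{gr}(P_n^m,I)\leq\gamma_{gr}(P_n^m,I')$.
   Context: $P_n^m$ is the $m$-th power of the path $P_n$: vertex set $[n]=\{1,\dots,n\}$, distinct $i,j$ adjacent iff $|i-j|\le m$. For a sequence $S=(v_1,\dots,v_k)$ of distinct vertices, $PN_S(v_i)=N[v_i]\setminus\bigcup_{j<i}N[v_j]$ ($N[\cdot]$ the closed neighborhood). $S$ is a legal dominating sequence if $\{v_1,\dots,v_k\}$ is dominating and each $PN_S(v_i)\ne\emptyset$. For such $S$ the footprinter $f_S(x)$ of a vertex $x$ is the unique $v_i$ with $x\in PN_S(v_i)$, and $I_S=\{v:f_S(v)=v\}$. For an independent set $I$, $\gamma_{gr}(G,I)$ is the maximum length of a legal dominating sequence $S$ of $G$ with $I_S=I$ ($-\infty$ if there is none). *)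

(* Vertices of P_n^m are the naturals 1..n. *)
From mathcomp Require Import all_boot.
Set Implicit Arguments. Unset Strict Implicit. Unset Printing Implicit Defensive.

Definition vert (n : nat) : seq nat := iota 1 n.
Definition is_vert (n x : nat) : bool := (1 <= x) && (x <= n).

Definition adj (m i j : nat) : bool := (i != j) && (i - j <= m) && (j - i <= m).

Definition inN (n m v x : nat) : bool := is_vert n x && ((x == v) || adj m v x).

(* x \in PN_S(v_i) = N[v_i] \ \bigcup_{j<i} N[v_j]  (i is a 0-based index) *)
Definition inPN (n m : nat) (S : seq nat) (i x : nat) : bool :=
  inN n m (nth 0 S i) x && ~~ has (fun v => inN n m v x) (take i S).

Definition dominating (n m : nat) (S : seq nat) : bool :=
  all (fun x => has (fun v => inN n m v x) S) (vert n).

Definition legal (n m : nat) (S : seq nat) : bool :=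
  [&& uniq S, all (is_vert n) S, dominating n m S &
      all (fun i => has (inPN n m S i) (vert n)) (iota 0 (size S))].

Definition footprinter (n m : nat) (S : seq nat) (x : nat) : nat :=
  nth 0 S (find (fun i => inPN n m S i x) (iota 0 (size S))).

Definition inIS (n m : nat) (S : seq nat) (v : nat) : bool :=
  is_vert n v && (footprinter n m S v == v).

(* I_S = I as sets (I a sequence of vertices representing a set) *)
Definition IS_eq (n m : nat) (S I : seq nat) : bool :=
  all (is_vert n) I && all (fun v => inIS n m S v == (v \in I)) (vert n).

Fixpoint arrangements (k : nat) (s : seq nat) : seq (seq nat) :=
  [::] :: (if k is k'.+1 then
             flatten [seq [seq x :: t | t <- arrangements k' (rem x s)] | x <- s]
           else [::]).

(* gamma_gr(P_n^m, I); None encodes -infinity *)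
Definition gamma_gr (n m : nat) (I : seq nat) : option nat :=
  let L := [seq size s | s <- arrangements n (vert n) & legal n m s && IS_eq n m s I] in
  if L is [::] then None else Some (\max_(k <- L) k).

Definition le_ext (a b : option nat) : bool :=
  match a, b with
  | None, _ => true
  | Some _, None => false
  | Some x, Some y => x <= y
  end.

Definition independent (n m : nat) (I : seq nat) : bool :=
  [&& uniq I, all (is_vert n) I &
      all (fun i => all (fun j => ~~ adj m i j) I) I].

Definition seq_max (I : seq nat) : nat := \max_(i <- I) i.
Definition seq_min (I : seq nat) : nat := foldr minn (head 0 I) I.

Definition in_tildeI (n m : nat) (I : seq nat) : bool :=
  [&& independent n m I, I != [::], seq_min I <= m.+1 & n - m <= seq_max I].

From mathcomp Require Import all_boot zify.

(* Let S be a legal dominating sequence with I_S = I and footprinter f.  A vertex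
   of I footprints itself, so no earlier vertex of S dominates it: earlier vertices
   lie at distance > m.  Hence no vertex of S strictly between two consecutive
   vertices a < b of I precedes both a and b (it would not be in I, so it would be
   dominated by a still earlier vertex, again strictly between a and b), and the m
   vertices of (a, b) next to whichever of a, b comes first in S are footprinted
   by it.  When min I <= m + 1 and max I >= n - m, the vertices left of min I and
   right of max I are footprinted by min I and max I.  Every vertex of S outside I
   footprints some vertex, so
     |S| <= |I| + n - ((min I - 1) + (n - max I) + |I| + (|I| - 1) m).
   The bound is attained by the increasing sequence of the vertices of
   [min I, max I] that are in I or have no vertex of I among their m right
   neighbours.  For the second claim take I' = {1, n}: its value n - m bounds
   every legal sequence, since the first vertex footprints its m + 1 closed
   neighbours. *)

Set Implicit Arguments.
Unset Strict Implicit.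
Unset Printing Implicit Defensive.

Lemma inNE n m v x : inN n m v x = [&& 0 < x, x <= n, v - x <= m & x - v <= m].
Proof.
rewrite /inN /is_vert /adj; have [->|_] := eqVneq x v.
  by rewrite subnn !andbT.
by rewrite -!andbA.
Qed.

Lemma mem_vert n x : (x \in vert n) = (0 < x) && (x <= n).
Proof. by rewrite mem_iota; lia. Qed.

Lemma inN_self n m v : 0 < v -> v <= n -> inN n m v v.
Proof. by move=> v0 vn; rewrite inNE v0 vn subnn. Qed.

Lemma count_iota_window (P : pred nat) a L b l :
  a <= b -> b + l <= a + L -> (forall x, b <= x < b + l -> P x) ->
  l <= count P (iota a L).
Proof.
move=> ab bl Pbl; have -> : L = (b - a) + (l + (a + L - (b + l))) by lia.
rewrite iotaD iotaD !count_cat subnKC //.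
have : count P (iota b l) = l.
  apply/eqP; rewrite -[X in _ == X](size_iota b l) -all_count; apply/allP => x.
  by rewrite mem_iota; apply: Pbl.
lia.
Qed.

Lemma count_inN n m v : 0 < v -> v <= n -> m < n -> m.+1 <= count (inN n m v) (vert n).
Proof.
move=> v0 vn mn; apply: (count_iota_window (b := minn v (n - m))); try lia.
by move=> x xb; rewrite inNE; lia.
Qed.

Definition consecutive (I : seq nat) a b := (a < b) && ~~ has (fun c => a < c < b) I.

Lemma path_ltn_bounds x s c : path ltn x s -> c \in x :: s -> x <= c <= last x s.
Proof.
elim: s x c => [|y s IH] x c /=; first by rewrite inE => _ /eqP->; rewrite leqnn.
move=> /andP[xy ys] /predU1P[->|/(IH _ _ ys)/andP[yc clast]].
  by have := IH y y ys (mem_head _ _); lia.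
by rewrite clast andbT (leq_trans (ltnW xy)).
Qed.

Lemma foldr_minn_le d s c : c \in s -> foldr minn d s <= c.
Proof.
by elim: s => //= x s IH /predU1P[->|/IH]; rewrite geq_min ?leqnn // => ->; rewrite orbT.
Qed.

Lemma leq_foldr_minn b d s : b <= d -> all (leq b) s -> b <= foldr minn d s.
Proof. by move=> bd; elim: s => //= x s IH /andP[bx /IH]; rewrite leq_min bx. Qed.

Lemma seq_min_sorted (I : seq nat) x s : path ltn x s -> x :: s =i I -> seq_min I = x.
Proof.
move=> xs sI; have bounds c : c \in I -> x <= c by rewrite -sI => /(path_ltn_bounds xs)/andP[].
have xI : x \in I by rewrite -sI mem_head.
apply/eqP; rewrite eqn_leq foldr_minn_le //= leq_foldr_minn //; last exact/allP.
by case: I sI bounds xI => //= d J _ -> //; rewrite mem_head.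
Qed.

Lemma seq_max_sorted (I : seq nat) x s : path ltn x s -> x :: s =i I -> seq_max I = last x s.
Proof.
move=> xs sI; apply/eqP; rewrite eqn_leq; apply/andP; split.
  by apply/bigmax_leqP_seq => c; rewrite -sI => /(path_ltn_bounds xs)/andP[].
by apply: (leq_bigmax_seq (F := id)); rewrite // -sI mem_last.
Qed.

Lemma count_path_gaps (P : pred nat) k x s :
  path (fun a b => (a < b) && (k <= count P (iota a (b - a)))) x s -> P (last x s) ->
  size s * k + 1 <= count P (iota x (last x s - x).+1).
Proof.
elim: s x => [|y s IH] x; first by rewrite subnn /= => _ ->.
rewrite [path _ _ _]/= [last _ _]/= [size _]/= => /andP[/andP[xy gap] ys] Plast.
have ylast : y <= last y s.
  have : path ltn y s by apply: sub_path ys => a b /andP[].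
  by case/path_ltn_bounds/(_ (mem_head _ _))/andP.
have -> : (last y s - x).+1 = (y - x) + (last y s - y).+1 by lia.
by rewrite iotaD count_cat subnKC ?(ltnW xy) // mulSn; have := IH y ys Plast; lia.
Qed.

Lemma path_consecutive x s : path ltn x s -> path (consecutive (x :: s)) x s.
Proof.
elim: s x => //= y s IH x /andP[xy ys]; have /allP ymin := order_path_min ltn_trans ys.
rewrite {1}/consecutive xy /= !ltnn andbF /=; apply/andP; split.
  by apply/hasP => -[c /ymin]; lia.
apply: (@sub_in_path _ (fun a => y <= a)) (IH y ys).
  move=> a b ya _ /andP[ab noc]; rewrite /consecutive ab /= negb_or noc andbT.
  lia.
by rewrite /= leqnn; apply/allP => c /ymin /ltnW.
Qed.

Lemma sorted_enum (I : seq nat) : uniq I -> I != [::] ->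
  exists (x : nat) (s : seq nat), [/\ path ltn x s, x :: s =i I & size s = (size I).-1].
Proof.
move=> uI nI; have : sorted ltn (sort leq I).
  by rewrite ltn_sorted_uniq_leq sort_uniq uI sort_sorted //; exact: leq_total.
have := mem_sort leq I; have := size_sort leq I.
case: (sort leq I) => [/esym/size0nil/eqP|x s szI memI xs]; first by rewrite (negbTE nI).
by exists x, s; rewrite -szI.
Qed.

Section LegalSequence.

Variables (n m : nat) (S : seq nat).

Definition dominated_before k y := has (fun u => inN n m u y) (take k S).

Lemma inPNE i x : inPN n m S i x = inN n m (nth 0 S i) x && ~~ dominated_before i x.
Proof. by []. Qed.

Lemma dominated_beforeP k y :
  reflect (exists2 u, u \in S & (index u S < k) && inN n m u y) (dominated_before k y).
Proof.
apply: (iffP hasP) => [[u uk yu]|[u uS /andP[uk yu]]]; last by exists u; rewrite ?in_take.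
by have uS := mem_take uk; exists u; rewrite // -in_take // uk.
Qed.

Lemma inPN_unique i j x : i < size S -> j < size S ->
  inPN n m S i x -> inPN n m S j x -> i = j.
Proof.
have later_not_private i' j' : i' < j' -> j' < size S -> inPN n m S i' x -> ~~ inPN n m S j' x.
  move=> ij jS /andP[xi _]; rewrite negb_and negbK; apply/orP; right; apply/hasP.
  by exists (nth 0 S i'); rewrite // -(nth_take _ ij) mem_nth // size_take jS.
move=> iS jS Pi Pj; case: (ltngtP i j) => // [ij|ji].
  by have := later_not_private _ _ ij jS Pi; rewrite Pj.
by have := later_not_private _ _ ji iS Pj; rewrite Pi.
Qed.

(* [footprinter] returns the junk value 0 when [y] lies in no private
   neighbourhood, hence the hypothesis [0 < v]. *)
Lemma footprinter_eqE v y : uniq S -> v \in S -> 0 < v ->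
  (footprinter n m S y == v) = inPN n m S (index v S) y.
Proof.
move=> uS vS v0; rewrite /footprinter.
set P := fun i => inPN n m S i y.
have vsz : index v S < size S by rewrite index_mem.
have [hasPN|noPN] := boolP (has P (iota 0 (size S))).
  have := nth_find 0 hasPN; move: hasPN; rewrite has_find size_iota => jS.
  rewrite nth_iota // add0n => Pj.
  apply/eqP/idP => [<-|Pv]; first by rewrite index_uniq.
  by rewrite (inPN_unique jS vsz Pj Pv) nth_index.
rewrite (hasNfind noPN) size_iota nth_default // ltn_eqF //; apply/esym/negbTE.
by apply: contra noPN => Pv; apply/hasP; exists (index v S); rewrite ?mem_iota.
Qed.

Lemma footprinter_mem y : 0 < footprinter n m S y -> footprinter n m S y \in S.
Proof.
rewrite /footprinter; set j := find _ _.
by case: (ltnP j (size S)) => [/mem_nth -> | jS]; rewrite // nth_default.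
Qed.

Hypothesis legalS : legal n m S.

Lemma legal_uniq : uniq S.
Proof. by case/and4P: legalS. Qed.

Lemma legal_vert u : u \in S -> (0 < u) && (u <= n).
Proof. by case/and4P: legalS => _ /allP/(_ u) h _ _ /h. Qed.

Lemma legal_private u : u \in S -> exists2 x, x \in vert n & footprinter n m S x = u.
Proof.
move=> uS; case/and4P: legalS => _ _ _ /allP/(_ (index u S)).
rewrite mem_iota index_mem uS => /(_ isT)/hasP[x xn Px]; exists x => //.
by apply/eqP; rewrite footprinter_eqE ?legal_uniq //; case/andP: (legal_vert uS).
Qed.

Lemma size_legal_le_count (J : seq nat) :
  size S + count (fun x => footprinter n m S x \in J) (vert n) <= size J + n.
Proof.
set Q := fun x => footprinter n m S x \in J.
have inJ : count (mem J) S <= size J.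
  rewrite -size_filter; apply: uniq_leq_size; first by rewrite filter_uniq // legal_uniq.
  by move=> x; rewrite mem_filter => /andP[].
have notJ : count (predC (mem J)) S <= count (predC Q) (vert n).
  rewrite -!size_filter -[X in _ <= X](size_map (footprinter n m S)).
  apply: uniq_leq_size; first by rewrite filter_uniq // legal_uniq.
  move=> u; rewrite mem_filter => /andP[uNJ uS].
  have [x xn fx] := legal_private uS.
  by apply/mapP; exists x; rewrite // mem_filter /= /Q fx xn andbT.
rewrite -[X in _ <= _ + X](size_iota 1 n) -(count_predC Q (vert n)).
by rewrite -(count_predC (mem J) S) addnAC -addnA !leq_add.
Qed.

Lemma size_legal_le : m < n -> size S <= n - m.
Proof.
move=> mn; case eS: S => [//|v s]; rewrite -eS.
have vS : v \in S by rewrite eS mem_head.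
have /andP[v0 vn] := legal_vert vS.
have fv x : inN n m v x -> footprinter n m S x \in [:: v].
  by move=> vx; rewrite inE footprinter_eqE ?legal_uniq // eS /= eqxx /inPN /= vx.
have := size_legal_le_count [:: v].
have := sub_count fv (vert n); have := count_inN v0 vn mn.
rewrite /=; lia.
Qed.

Variable I : seq nat.
Hypothesis IS_I : IS_eq n m S I.

Lemma IS_vert v : v \in I -> (0 < v) && (v <= n).
Proof. by case/andP: IS_I => /allP/(_ v) h _ /h. Qed.

Lemma footprinter_fixedE v : 0 < v -> v <= n -> (footprinter n m S v == v) = (v \in I).
Proof.
case/andP: IS_I => _ /allP/(_ v) + v0 vn; rewrite mem_vert v0 vn => /(_ isT)/eqP <-.
by rewrite /inIS /is_vert v0 vn.
Qed.

Lemma footprinter_IS_self v : v \in I -> footprinter n m S v = v.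
Proof. by move=> vI; have /andP[v0 vn] := IS_vert vI; apply/eqP; rewrite footprinter_fixedE. Qed.

Lemma IS_mem v : v \in I -> v \in S.
Proof.
move=> vI; have /andP[v0 _] := IS_vert vI.
by rewrite -(footprinter_IS_self vI) footprinter_mem // footprinter_IS_self.
Qed.

Lemma IS_undominated v : v \in I -> ~~ dominated_before (index v S) v.
Proof.
move=> vI; have /andP[v0 vn] := IS_vert vI.
have := footprinter_fixedE v0 vn; rewrite vI footprinter_eqE ?legal_uniq ?IS_mem //.
by case/andP.
Qed.

Lemma IS_far_from_earlier a w : a \in I -> w \in S -> index w S < index a S ->
  (a + m < w) || (w + m < a).
Proof.
move=> aI wS wa; have /andP[a0 an] := IS_vert aI.
apply: contraR (IS_undominated aI) => near; apply/dominated_beforeP.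
by exists w; rewrite // wa inNE a0 an /=; lia.
Qed.

Lemma notIS_dominated x : x \in S -> x \notin I -> dominated_before (index x S) x.
Proof.
move=> xS xI; have /andP[x0 xn] := legal_vert xS.
have := footprinter_fixedE x0 xn.
by rewrite (negbTE xI) footprinter_eqE ?legal_uniq // /inPN nth_index // inN_self // => /negbFE.
Qed.

Lemma footprinter_IS a y : a \in I -> inN n m a y -> ~~ dominated_before (index a S) y ->
  footprinter n m S y = a.
Proof.
move=> aI ay ndy; have aS := IS_mem aI; have /andP[a0 _] := IS_vert aI.
by apply/eqP; rewrite footprinter_eqE ?legal_uniq // /inPN nth_index // ay.
Qed.

Lemma gap_vertex_not_first a b u : consecutive I a b -> a \in I -> b \in I -> u \in S ->
  a < u < b -> index u S < index a S -> index u S < index b S -> False.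
Proof.
move=> /andP[_ noI] aI bI; have [k] := ubnP (index u S).
elim: k u => // k IH u uk uS aub ua ub.
have uI : u \notin I by apply: contra noI => uI; apply/hasP; exists u.
have /dominated_beforeP[w wS /andP[wu]] := notIS_dominated uS uI.
rewrite inNE => /and4P[_ _ wu1 wu2].
have := IS_far_from_earlier aI wS (ltn_trans wu ua).
have := IS_far_from_earlier bI wS (ltn_trans wu ub).
move=> farb fara; apply: (IH w (leq_trans wu uk) wS _ (ltn_trans wu ua) (ltn_trans wu ub)); lia.
Qed.

Lemma footprinter_gap_first_end a b c y : consecutive I a b -> a \in I -> b \in I ->
  (c == a) || (c == b) -> index c S <= index a S -> index c S <= index b S ->
  a < y < b -> inN n m c y -> footprinter n m S y = c.
Proof.
move=> abI aI bI cab ca cb ayb cy.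
have cI : c \in I by case/orP: cab => /eqP ->.
apply: footprinter_IS => //; apply/dominated_beforeP => -[w wS /andP[wc]].
rewrite inNE => /and4P[_ _ wy1 wy2].
have wa := leq_trans wc ca; have wb := leq_trans wc cb.
have := IS_far_from_earlier aI wS wa; have := IS_far_from_earlier bI wS wb => farb fara.
by apply: (gap_vertex_not_first abI aI bI wS) => //; lia.
Qed.

Lemma count_footprinter_gap a b : consecutive I a b -> a \in I -> b \in I ->
  m.+1 <= count (fun y => footprinter n m S y \in I) (iota a (b - a)).
Proof.
move=> abI aI bI; have /andP[ab _] := abI.
have [aS bS] := (IS_mem aI, IS_mem bI).
have /andP[a0 an] := IS_vert aI; have /andP[b0 bn] := IS_vert bI.
have far : a + m < b.
  case: (ltngtP (index a S) (index b S)) => [lt|gt|eq].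
  - by have := IS_far_from_earlier bI aS lt; lia.
  - by have := IS_far_from_earlier aI bS gt; lia.
  - by move: ab; rewrite -(nth_index 0 aS) eq nth_index ?ltnn.
have -> : b - a = (b - a.+1).+1 by lia.
rewrite /= footprinter_IS_self // aI add1n ltnS.
have [ab_order|ba_order] := leqP (index a S) (index b S).
  apply: (count_iota_window (b := a.+1)); try lia.
  move=> y hy; rewrite (@footprinter_gap_first_end a b a) ?eqxx //; try lia.
  by rewrite inNE; lia.
apply: (count_iota_window (b := b - m)); try lia.
move=> y hy; rewrite (@footprinter_gap_first_end a b b) ?eqxx ?orbT //; try lia.
by rewrite inNE; lia.
Qed.

Lemma footprinter_left_end a y : a \in I -> a <= m.+1 -> 0 < y < a ->
  footprinter n m S y = a.
Proof.
move=> aI am ya; have /andP[a0 an] := IS_vert aI.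
apply: footprinter_IS => //; first by rewrite inNE; lia.
apply/dominated_beforeP => -[w wS /andP[wa]]; rewrite inNE => /and4P[_ _ wy1 wy2].
have := IS_far_from_earlier aI wS wa; have := legal_vert wS; lia.
Qed.

Lemma footprinter_right_end a y : a \in I -> n <= a + m -> a < y <= n ->
  footprinter n m S y = a.
Proof.
move=> aI am ay; have /andP[a0 an] := IS_vert aI.
apply: footprinter_IS => //; first by rewrite inNE; lia.
apply/dominated_beforeP => -[w wS /andP[wa]]; rewrite inNE => /and4P[_ _ wy1 wy2].
have := IS_far_from_earlier aI wS wa; have := legal_vert wS; lia.
Qed.

Lemma count_footprinter_IS_span x s : path ltn x s -> x :: s =i I ->
  size s * m.+1 + 1 <= count (fun y => footprinter n m S y \in I) (iota x (last x s - x).+1).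
Proof.
move=> xs memI; apply: count_path_gaps; last by rewrite footprinter_IS_self -memI ?mem_last.
apply: (@sub_in_path _ (mem I)) (path_consecutive xs); last by apply/allP => c; rewrite memI.
move=> a b aI bI abI; have abI' : consecutive I a b by rewrite /consecutive -(eq_has_r memI).
by rewrite (count_footprinter_gap abI' aI bI) andbT; case/andP: abI.
Qed.

Lemma size_legal_IS_le : uniq I -> I != [::] -> seq_min I <= m.+1 -> n - m <= seq_max I ->
  size S <= seq_max I - seq_min I + 1 - (size I - 1) * m.
Proof.
move=> uI nI; have [x [s [xs memI szI]]] := sorted_enum uI nI.
rewrite (seq_min_sorted xs memI) (seq_max_sorted xs memI) => xm him.
have xI : x \in I by rewrite -memI mem_head.
have lastI : last x s \in I by rewrite -memI mem_last.
have /andP[xlast _] := path_ltn_bounds xs (mem_last x s).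
have span := count_footprinter_IS_span xs memI.
set hi := last x s in lastI xlast span him *.
have /andP[x0 _] := IS_vert xI; have /andP[_ hin] := IS_vert lastI.
set P := fun y => footprinter n m S y \in I.
have left : x.-1 <= count P (iota 1 x.-1).
  apply: (count_iota_window (b := 1)) => // y hy.
  by rewrite /P (footprinter_left_end xI) //; lia.
have right : n - hi <= count P (iota hi.+1 (n - hi)).
  apply: (count_iota_window (b := hi.+1)) => // y hy.
  by rewrite /P (footprinter_right_end lastI) //; lia.
have splitn : count P (vert n) =
    count P (iota 1 x.-1) + count P (iota x (hi - x).+1) + count P (iota hi.+1 (n - hi)).
  have e : n = x.-1 + ((hi - x).+1 + (n - hi)) by lia.
  rewrite /vert {1}e iotaD iotaD !count_cat addnA {e}.
  by rewrite (_ : 1 + x.-1 = x) 1?(_ : x + _ = hi.+1) //; lia.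
have -> : size I - 1 = size s by lia.
have := size_legal_le_count I; rewrite -/P mulnS in span *; lia.
Qed.

End LegalSequence.

Section OptimalSequence.

Variables (n m : nat) (I : seq nat) (lo hi : nat).
Hypotheses (m0 : 0 < m) (lo0 : 0 < lo) (hin : hi <= n) (lom : lo <= m.+1) (him : n <= hi + m).
Hypotheses (loI : lo \in I) (hiI : hi \in I).
Hypotheses (lo_min : forall c : nat, c \in I -> lo <= c) (hi_max : forall c : nat, c \in I -> c <= hi).
Hypothesis farI : forall a b : nat, a \in I -> b \in I -> a < b -> a + m < b.

Definition kept x := (x \in I) || ~~ has (fun c => x < c <= x + m) I.

Definition optimal_seq := [seq x <- iota lo (hi - lo).+1 | kept x].

Lemma mem_optimal_seq z : (z \in optimal_seq) = [&& lo <= z, z <= hi & kept z].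
Proof.
have := lo_min hiI; rewrite mem_filter mem_iota.
by case: (kept z); rewrite ?andbF ?andbT //=; lia.
Qed.

Lemma sorted_optimal_seq : sorted ltn optimal_seq.
Proof. exact: sorted_filter ltn_trans _ _ (iota_ltn_sorted _ _). Qed.

Lemma uniq_optimal_seq : uniq optimal_seq.
Proof. by rewrite filter_uniq // iota_uniq. Qed.

Lemma optimal_seq_vert z : z \in optimal_seq -> (0 < z) && (z <= n).
Proof. by rewrite mem_optimal_seq; lia. Qed.

Lemma I_sub_optimal_seq c : c \in I -> c \in optimal_seq.
Proof. by move=> cI; rewrite mem_optimal_seq /kept cI lo_min ?hi_max. Qed.

Lemma index_optimal_seq_lt (u x : nat) : u \in optimal_seq -> x \in optimal_seq ->
  (index u optimal_seq < index x optimal_seq) = (u < x).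
Proof.
move=> uT xT; apply/idP/idP; first exact: (sorted_ltn_index ltn_trans sorted_optimal_seq).
move=> ux; rewrite ltnNge; apply/negP.
move/(sorted_leq_index leq_trans leqnn (sub_sorted ltnW sorted_optimal_seq) x u xT uT).
by rewrite leqNgt ux.
Qed.

Lemma dominated_before_optimal_seqE (x y : nat) : x \in optimal_seq ->
  dominated_before n m optimal_seq (index x optimal_seq) y =
  has (fun z => (z < x) && inN n m z y) optimal_seq.
Proof.
move=> xT; apply/dominated_beforeP/hasP => -[z zT /andP[zx zy]]; exists z; rewrite // zy andbT.
  by rewrite -(index_optimal_seq_lt zT xT).
by rewrite index_optimal_seq_lt.
Qed.

Lemma optimal_seq_I_undominated (x : nat) : x \in I ->
  ~~ dominated_before n m optimal_seq (index x optimal_seq) x.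
Proof.
move=> xI; rewrite dominated_before_optimal_seqE ?I_sub_optimal_seq //.
apply/hasP => -[z]; rewrite mem_optimal_seq => /and3P[_ _ kz] /andP[zx].
rewrite inNE => /and4P[_ _ _ xz]; case/orP: kz => [zI|/hasP[]].
  by have := farI zI xI zx; lia.
by exists x => //; lia.
Qed.

Lemma optimal_seq_notI_lt (x : nat) : x \in optimal_seq -> x \notin I -> x + m < hi.
Proof.
rewrite mem_optimal_seq /kept => /and3P[_ xhi] + xI; rewrite (negbTE xI) /= => /hasP nocov.
have xnhi : x != hi by apply: contraNneq xI => ->.
by rewrite ltnNge; apply/negP => hx; apply: nocov; exists hi => //; lia.
Qed.

Lemma optimal_seq_notI_private (x : nat) : x \in optimal_seq -> x \notin I ->
  inPN n m optimal_seq (index x optimal_seq) (x + m).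
Proof.
move=> xT xI; have := optimal_seq_notI_lt xT xI; have /andP[x0 xn] := optimal_seq_vert xT.
rewrite inPNE nth_index // dominated_before_optimal_seqE // inNE => xmhi; apply/andP; split.
  lia.
by apply/hasP => -[z _ /andP[zx]]; rewrite inNE; lia.
Qed.

Lemma optimal_seq_notI_dominated (x : nat) : x \in optimal_seq -> x \notin I ->
  dominated_before n m optimal_seq (index x optimal_seq) x.
Proof.
move=> xT xI; have /andP[x0 xn] := optimal_seq_vert xT.
have := xT; rewrite mem_optimal_seq /kept (negbTE xI) /= => /and3P[lox xhi nocov].
have lo_x : lo < x by rewrite ltn_neqAle lox andbT; apply: contraNneq xI => <-.
rewrite dominated_before_optimal_seqE //; apply/hasP; exists x.-1; last by rewrite inNE; lia.
rewrite mem_optimal_seq /kept; apply/and3P; split; try lia.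
case: (x.-1 \in I) => //=; apply: contra nocov => /hasP[c cI cx]; apply/hasP; exists c => //.
have : c != x by apply: contraNneq xI => <-.
lia.
Qed.

Lemma optimal_seq_dominating (y : nat) : 0 < y <= n -> has (fun z => inN n m z y) optimal_seq.
Proof.
move=> yn; case: (ltnP y lo) => [ylo|loy].
  by apply/hasP; exists lo; rewrite ?I_sub_optimal_seq // inNE; lia.
case: (ltnP hi y) => [hiy|yhi].
  by apply/hasP; exists hi; rewrite ?I_sub_optimal_seq // inNE; lia.
have [ky|] := boolP (kept y).
  by apply/hasP; exists y; rewrite ?mem_optimal_seq ?loy ?yhi // inN_self //; lia.
rewrite /kept negb_or negbK => /andP[_ /hasP[c cI yc]].
by apply/hasP; exists c; rewrite ?I_sub_optimal_seq // inNE; lia.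
Qed.

Lemma optimal_seq_legal : legal n m optimal_seq.
Proof.
apply/and4P; split; first exact: uniq_optimal_seq.
- by apply/allP => z /optimal_seq_vert.
- by apply/allP => y; rewrite mem_vert => /optimal_seq_dominating.
apply/allP => i; rewrite mem_iota add0n => /= iT.
set x := nth 0 optimal_seq i; have xT : x \in optimal_seq := mem_nth 0 iT.
have <- : index x optimal_seq = i by rewrite index_uniq // uniq_optimal_seq.
have /andP[x0 xn] := optimal_seq_vert xT.
have [xI|xnI] := boolP (x \in I).
  apply/hasP; exists x; first by rewrite mem_vert x0 xn.
  by rewrite inPNE nth_index // inN_self // optimal_seq_I_undominated.
apply/hasP; exists (x + m); last exact: optimal_seq_notI_private.
by have := optimal_seq_notI_lt xT xnI; rewrite mem_vert; lia.
Qed.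

Lemma optimal_seq_IS : IS_eq n m optimal_seq I.
Proof.
apply/andP; split; first by apply/allP => c /I_sub_optimal_seq/optimal_seq_vert.
apply/allP => v; rewrite mem_vert => /andP[v0 vn]; rewrite /inIS /is_vert v0 vn /=.
have [vT|vnT] := boolP (v \in optimal_seq).
  rewrite footprinter_eqE ?uniq_optimal_seq // inPNE nth_index // inN_self //=.
  have [vI|vnI] := boolP (v \in I); first by rewrite optimal_seq_I_undominated.
  by rewrite optimal_seq_notI_dominated.
have vnI : v \notin I by apply: contra vnT => /I_sub_optimal_seq.
rewrite (negbTE vnI) eqbF_neg; apply: contra vnT => /eqP fv.
by rewrite -fv footprinter_mem // fv.
Qed.

Lemma size_optimal_seq : uniq I -> hi - lo + 1 - (size I - 1) * m <= size optimal_seq.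
Proof.
move=> uI; have := count_predC kept (iota lo (hi - lo).+1).
rewrite size_iota -size_filter -/optimal_seq.
suff : count (predC kept) (iota lo (hi - lo).+1) <= (size I - 1) * m by lia.
rewrite subn1 -(size_rem loI) -size_filter -[m in _ * m](size_iota 1 m) -(size_allpairs (fun c k => c - k)).
apply: uniq_leq_size; first by rewrite filter_uniq ?iota_uniq.
move=> x; rewrite mem_filter mem_iota /= /kept negb_or negbK.
move=> /andP[/andP[_ /hasP[c cI xc]] /andP[lox _]].
apply/allpairsP; exists (c, c - x); rewrite /= mem_iota (mem_rem_uniq _ uI) inE cI andbT.
by have := lo_min cI; split; lia.
Qed.

End OptimalSequence.

Lemma mem_arrangements k (r s : seq nat) : uniq r -> uniq s -> size s <= k ->
  {subset s <= r} -> s \in arrangements k r.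
Proof.
elim: k r s => [|k IH] r [|x s] //= ur /andP[xs us] sk sr; rewrite inE /=.
apply/flatten_mapP; exists x; first by apply: sr; rewrite mem_head.
apply/mapP; exists s => //; apply: IH => //; first exact: rem_uniq.
move=> y ys; rewrite (mem_rem_uniq _ ur) inE sr ?inE ?ys ?orbT // andbT.
by apply: contraNneq xs => <-.
Qed.

Lemma legal_mem_arrangements n m S : legal n m S -> S \in arrangements n (vert n).
Proof.
move=> legalS; have sub : {subset S <= vert n} by move=> u /(legal_vert legalS); rewrite mem_vert.
apply: mem_arrangements; rewrite ?iota_uniq ?(legal_uniq legalS) //.
by rewrite -(size_iota 1 n) uniq_leq_size ?(legal_uniq legalS).
Qed.

Lemma gamma_gr_attained n m I S0 : legal n m S0 -> IS_eq n m S0 I ->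
  (forall S, legal n m S -> IS_eq n m S I -> size S <= size S0) ->
  gamma_gr n m I = Some (size S0).
Proof.
move=> legalS0 IS0 S0max; rewrite /gamma_gr.
set L := [seq size s | s <- _ & _].
have S0L : size S0 \in L.
  by apply: map_f; rewrite mem_filter legalS0 IS0 (legal_mem_arrangements legalS0).
have Lmax k : k \in L -> k <= size S0.
  by case/mapP=> S; rewrite mem_filter => /andP[/andP[legalS IS] _] ->; apply: S0max.
case: L S0L Lmax => // k0 L' S0L Lmax; congr Some; apply/eqP; rewrite eqn_leq.
by rewrite (leq_bigmax_seq (F := id) _ S0L) // andbT; apply/bigmax_leqP_seq => k /Lmax.
Qed.

Lemma le_ext_gamma_gr n m I k : (forall S, legal n m S -> size S <= k) ->
  le_ext (gamma_gr n m I) (Some k).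
Proof.
move=> Smax; rewrite /gamma_gr; set L := [seq size s | s <- _ & _].
have Lk j : j \in L -> j <= k.
  by case/mapP => S; rewrite mem_filter => /andP[/andP[/Smax ? _] _] ->.
by case: L Lk => //= k0 L Lk; apply/bigmax_leqP_seq => j /Lk.
Qed.

Lemma gamma_gr_tilde n m I : 0 < m -> in_tildeI n m I ->
  gamma_gr n m I = Some (seq_max I - seq_min I + 1 - (size I - 1) * m).
Proof.
move=> m0 tildeI; have /and4P[/and3P[uI /allP vertI /allP adjI] nI lom him] := tildeI.
have [x [s [xs memI szI]]] := sorted_enum uI nI.
have Ibounds c : c \in I -> x <= c <= last x s by rewrite -memI; apply: path_ltn_bounds.
have xI : x \in I by rewrite -memI mem_head.
have hiI : last x s \in I by rewrite -memI mem_last.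
have /andP[x0 _] := vertI x xI; have /andP[_ hin] := vertI _ hiI.
have farI (a b : nat) : a \in I -> b \in I -> a < b -> a + m < b.
  by move=> aI bI; have := allP (adjI a aI) b bI; rewrite /adj; lia.
have lo_eq := seq_min_sorted xs memI; have hi_eq := seq_max_sorted xs memI.
have xm : x <= m.+1 by rewrite -lo_eq.
have hi_m : n <= last x s + m by rewrite -hi_eq; lia.
set T := optimal_seq m I x (last x s).
have [legalT IST] : legal n m T /\ IS_eq n m T I.
  by split; [apply: optimal_seq_legal | apply: optimal_seq_IS] => // c /Ibounds/andP[].
have sizeT : size T = seq_max I - seq_min I + 1 - (size I - 1) * m.
  apply/eqP; rewrite eqn_leq (size_legal_IS_le legalT IST) //= lo_eq hi_eq.
  by rewrite (size_optimal_seq (n := n)) // => c /Ibounds/andP[].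
rewrite -sizeT; apply: gamma_gr_attained => // S legalS IS; rewrite sizeT.
exact: (size_legal_IS_le legalS IS).
Qed.

Lemma in_tildeI_ends n m : m + 2 <= n -> in_tildeI n m [:: 1; n].
Proof.
move=> mn; rewrite /in_tildeI /independent /seq_min /seq_max /= !big_cons big_nil.
rewrite /adj /is_vert !inE; lia.
Qed.

Theorem lemma6 (n m : nat) (hm : 0 < m) (hmn : m + 2 <= n) :
  (forall I : seq nat, in_tildeI n m I ->
     gamma_gr n m I = Some (seq_max I - seq_min I + 1 - (size I - 1) * m)) /\
  (forall I : seq nat, independent n m I -> I != [::] ->
     exists I' : seq nat, in_tildeI n m I' /\ le_ext (gamma_gr n m I) (gamma_gr n m I')).
Proof.
split=> [I|I _ _]; first exact: gamma_gr_tilde.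
exists [:: 1; n]; split; first exact: in_tildeI_ends.
rewrite (gamma_gr_tilde hm (in_tildeI_ends hmn)).
have -> : seq_max [:: 1; n] - seq_min [:: 1; n] + 1 - (size [:: 1; n] - 1) * m = n - m.
  by rewrite /seq_max /seq_min !big_cons big_nil /=; lia.
by apply: le_ext_gamma_gr => S legalS; apply: (size_legal_le legalS); lia.
Qed.
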